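(* Fix $m\ge1$. For every constant $c>0$, \[\limsup_{n\to\infty}\left\|OST_{m,n}^{\,n\log n+cn}-U_{m,n}\right\|_{Sep}\le e^{-c}.\]
   Context: Let $\xi$ be a primitive $m$-th root of unity and $[n]=\{1,\dots,n\}$. The generalized symmetric group $G_{m,n}$ (order $m^nn!$) is the set of tuples $(\xi^{k_1},\dots,\xi^{k_n},\sigma)$ with $k_i\in\mathbb{Z}_m$, $\sigma\in S_n$, with multiplication $(\xi^{k_1},\dots,\xi^{k_n},\sigma)(\xi^{k_1'},\dots,\xi^{k_n'},\sigma')=(\xi^{k_1}\xi^{k'_{\sigma(1)}},\dots,\xi^{k_n}\xi^{k'_{\sigma(n)}},\sigma\sigma')$. For $1\le i\le j\le n$, $k\in\mathbb{Z}_m$, let $g_{i,j,k}$ have permutation part the transposition $(ij)$ (identity if $i=j$) and tuple with $\xi^k$ in positions $i$ and $j$ and $1$ elsewhere. $OST_{m,n}$ is the law of $g_{i,j,k}$ with $j$ uniform on $[n]$, then $i$ uniform on $[j]$, $k$ uniform on $\mathbb{Z}_m$ independently (probability $\frac{1}{njm}$ per triple). $OST^t_{m,n}$ is its $t$-fold convolution power (exponents understood as integers). $U_{m,n}$ is the uniform distribution on $G_{m,n}$, and the separation distance is $\|P-U\|_{Sep}=1-\min_{g\in G_{m,n}}P(g)/U(g)$. *)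

From HB Require Import structures.
From mathcomp Require Import all_boot all_order all_algebra all_fingroup.
From mathcomp Require Import all_classical all_reals all_analysis.
Set Implicit Arguments. Unset Strict Implicit. Unset Printing Implicit Defensive.
Import Order.TTheory GRing.Theory Num.Theory.
Local Open Scope ring_scope.

(* Generalized symmetric group G_{m,n}, m >= 1.  An element
   (xi^{k_1},...,xi^{k_n}, sigma) is encoded by its exponent vector
   k : 'I_n -> Z_m (Z_m represented by 'I_(m.-1.+1), which is 'I_m for
   m >= 1, with its canonical additive group structure) and sigma : 'S_n.
   Positions [n] = {1..n} are encoded 0-based as 'I_n. *)
Definition Gmn (m n : nat) : finType :=
  ({ffun 'I_n -> 'I_m.-1.+1} * 'S_n)%type.

(* Product: (k, s)(k', s') = (i |-> k_i + k'_{s(i)}, s s').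
   MathComp's permutation product satisfies (s * s') i = s' (s i), which is
   exactly the composition convention making this law associative. *)
Definition Gmul (m n : nat) (a b : Gmn m n) : Gmn m n :=
  ([ffun i => (a.1 i + b.1 (a.2 i))%R], (a.2 * b.2)%g).

Definition Gone (m n : nat) : Gmn m n := ([ffun => 0%R], 1%g).

Definition gen (m n : nat) (i j : 'I_n) (k : 'I_m.-1.+1) : Gmn m n :=
  ([ffun l => if (l == i) || (l == j) then k else 0%R], tperm i j).

Section Dist.
Variable R : realType.

(* OST_{m,n}: j uniform on [n], i uniform on [j] (i <= j), k uniform on Z_m;
   mass 1/(n j m) per triple (1-based j = val j + 1). *)
Definition OST (m n : nat) (g : Gmn m n) : R :=
  \sum_(j : 'I_n) \sum_(i : 'I_n | (i <= j)%N) \sum_(k : 'I_m.-1.+1)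
     (if gen i j k == g then (n%:R * (j.+1)%:R * m%:R)^-1 else 0).

Definition conv (m n : nat) (P Q : Gmn m n -> R) (g : Gmn m n) : R :=
  \sum_(a : Gmn m n) \sum_(b : Gmn m n)
     (if Gmul a b == g then P a * Q b else 0).

Definition delta1 (m n : nat) (g : Gmn m n) : R :=
  if g == Gone m n then 1 else 0.

Definition convpow (m n : nat) (P : Gmn m n -> R) (t : nat) : Gmn m n -> R :=
  iter t (fun X => conv X P) (@delta1 m n).

Definition Unif (m n : nat) (g : Gmn m n) : R := (#|Gmn m n|%:R)^-1.

Definition sep (m n : nat) (P : Gmn m n -> R) : R :=
  1 - \big[Num.min/(P (Gone m n) / Unif (Gone m n))]_(g : Gmn m n)
        (P g / Unif g).

End Dist.

From Pilot Require Import Defs.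
From HB Require Import structures.
From mathcomp Require Import all_boot all_order all_algebra all_fingroup.
From mathcomp Require Import all_classical all_reals all_analysis.
From mathcomp Require Import lra.
Import Order.TTheory GRing.Theory Num.Theory.
Set Implicit Arguments. Unset Strict Implicit. Unset Printing Implicit Defensive.
Local Open Scope ring_scope.

(* Let H_a be the copy of G_{m,a} in G_{m,n} (elements moving only the first
   a positions) and U_a the uniform law on H_a, so U_0 is the point mass at 1
   and U_n is uniform.  A step of the walk with j = x pushes U_x to U_{x+1}, and
   every product of steps commutes with every U_a, because an element of H_a
   can be moved past a step at the price of relabelling the step.  Hence if the
   positions j_1, ..., j_t drawn by the walk cover [n], its law is obtained from
   U_0 by raising a one position at a time: it is uniform.  So OST^t is at
   least the uniform law times P(all positions drawn), and the union bound of
   the coupon collector gives a separation distance at most n (1 - 1/n)^t,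
   which is at most e^{-c} / (1 - 1/n) at t = n log n + c n. *)

Section GroupAlgebra.
Variables (R : numFieldType) (gT : finGroupType).
Implicit Types (P Q S F : gT -> R) (H K : {group gT}).

Definition convg P Q (g : gT) : R := \sum_a P a * Q (a^-1 * g)%g.

Definition finvg F (g : gT) : R := F g^-1%g.

Definition unif H (g : gT) : R := if g \in H then #|H|%:R^-1 else 0.

Definition left_inv (A : {set gT}) F := forall h g, h \in A -> F (h * g)%g = F g.

Definition right_inv (A : {set gT}) F := forall h g, h \in A -> F (g * h)%g = F g.

Lemma convgA P Q S : convg (convg P Q) S = convg P (convg Q S).
Proof.
apply: funext => g; rewrite /convg.
under eq_bigr do rewrite mulr_suml.
rewrite exchange_big /=; apply: eq_bigr => a _; rewrite mulr_sumr.
rewrite (reindex_inj (mulgI a)) /=; apply: eq_bigr => b _.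
by rewrite mulKg invMg mulgA mulrA.
Qed.

Lemma sum_convg P Q : \sum_g convg P Q g = (\sum_g P g) * (\sum_g Q g).
Proof.
rewrite /convg exchange_big mulr_suml; apply: eq_bigr => a _.
by rewrite -mulr_sumr (reindex_inj (mulgI a)); under eq_bigr do rewrite mulKg.
Qed.

Lemma convg_ge0 P Q g : (forall a, 0 <= P a) -> (forall a, 0 <= Q a) -> 0 <= convg P Q g.
Proof. by move=> P0 Q0; apply: sumr_ge0 => a _; apply: mulr_ge0. Qed.

Lemma convg_suml (I : Type) (r : seq I) (c : I -> R) (P : I -> gT -> R) Q :
  convg (fun g => \sum_(i <- r) c i * P i g) Q =
  fun g => \sum_(i <- r) c i * convg (P i) Q g.
Proof.
apply: funext => g; rewrite /convg.
under eq_bigr do rewrite mulr_suml.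
rewrite exchange_big; apply: eq_bigr => i _; rewrite mulr_sumr.
by apply: eq_bigr => a _; rewrite mulrA.
Qed.

Lemma convg_sumr (I : Type) (r : seq I) (c : I -> R) P (Q : I -> gT -> R) :
  convg P (fun g => \sum_(i <- r) c i * Q i g) =
  fun g => \sum_(i <- r) c i * convg P (Q i) g.
Proof.
apply: funext => g; rewrite /convg.
under eq_bigr do rewrite mulr_sumr.
rewrite exchange_big; apply: eq_bigr => i _; rewrite mulr_sumr.
by apply: eq_bigr => a _; rewrite mulrCA.
Qed.

Lemma finvg_convg P Q : finvg (convg P Q) = convg (finvg Q) (finvg P).
Proof.
apply: funext => g; rewrite /finvg /convg.
rewrite [RHS](reindex_inj (mulgI g)); apply: eq_bigr => a _.
by rewrite mulrC invMg mulgKV invgK.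
Qed.

Lemma left_inv_finvg H F : left_inv H (finvg F) -> right_inv H F.
Proof.
move=> HF h g Hh.
by have := HF h^-1%g g^-1%g; rewrite /finvg invMg !invgK groupV => ->.
Qed.

Lemma unif_ge0 H g : 0 <= unif H g.
Proof. by rewrite /unif; case: ifP; rewrite ?invr_ge0 ?ler0n. Qed.

Lemma sum_unif H : \sum_g unif H g = 1.
Proof.
rewrite /unif -big_mkcond /= sumr_const -[_ *+ _]mulr_natr mulVf //.
by rewrite pnatr_eq0 -lt0n cardG_gt0.
Qed.

Lemma finvg_unif H : finvg (unif H) = unif H.
Proof. by apply: funext => g; rewrite /finvg /unif groupV. Qed.

Lemma unif_left_inv H K : H \subset K -> left_inv H (unif K).
Proof. by move=> sHK h g /(fintype.subsetP sHK) Kh; rewrite /unif groupMl. Qed.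

Lemma convg_unifl H F : left_inv H F -> convg (unif H) F = F.
Proof.
move=> HF; apply: funext => g; rewrite /convg.
rewrite (eq_bigr (fun a => unif H a * F g)) => [|a _]; last first.
  by rewrite /unif; case: ifP => [Ha|_]; rewrite ?mul0r // HF ?groupV.
by rewrite -mulr_suml sum_unif mul1r.
Qed.

Lemma convg_unifr H F : right_inv H F -> convg F (unif H) = F.
Proof.
move=> HF; apply: funext => g; rewrite /convg (reindex_inj (mulgI g)) /=.
rewrite (eq_bigr (fun b => finvg (unif H) b * F g)) => [|b _]; last first.
  rewrite invMg mulgKV /finvg mulrC; have [Hb|Hb] := boolP (b \in H); first by rewrite HF.
  by rewrite /unif groupV (negPf Hb) !mul0r.
by rewrite -mulr_suml finvg_unif sum_unif mul1r.
Qed.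

Lemma convg_unif1l F : convg (unif 1%G) F = F.
Proof. by apply: convg_unifl => h g; rewrite inE => /eqP ->; rewrite mul1g. Qed.

Lemma convg_unif1r F : convg F (unif 1%G) = F.
Proof. by apply: convg_unifr => h g; rewrite inE => /eqP ->; rewrite mulg1. Qed.

Lemma convg_unifT P : \sum_g P g = 1 -> convg P (unif [set: gT]%G) = unif [set: gT]%G.
Proof.
move=> P1; apply: funext => g; rewrite /convg /unif inE.
by under eq_bigr do rewrite inE; rewrite -mulr_suml P1 mul1r.
Qed.

Lemma convg_unif_comm H P :
  left_inv H (convg P (unif H)) -> right_inv H (convg (unif H) P) ->
  convg P (unif H) = convg (unif H) P.
Proof. by move=> HL HR; rewrite -(convg_unifl HL) -(convg_unifr HR) convgA. Qed.

Lemma eq_unif H F c :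
  (forall g, F g = if g \in H then c else 0) -> \sum_g F g = 1 -> F = unif H.
Proof.
move=> HF; rewrite (eq_bigr _ (fun g _ => HF g)) -big_mkcond sumr_const => Hc.
have nz : #|H|%:R != 0 :> R by rewrite pnatr_eq0 -lt0n cardG_gt0.
apply: funext => g; rewrite HF /unif; case: ifP => // _.
by apply: (mulIf nz); rewrite mulVf // mulr_natr.
Qed.

End GroupAlgebra.

Arguments unif {R gT} H g.

(* [Gmn m n] is a term of type [finType], on which no structure can be keyed:
   the group law of G_{m,n} is put on the type alias [gsym m n]. *)
Definition gsym (m n : nat) : Type := Gmn m n.
HB.instance Definition _ m n := Finite.on (gsym m n).

Section GroupLaw.
Variables m n : nat.
Local Notation G := (gsym m n).

Definition Ginv (a : G) : G := ([ffun i => (- a.1 ((a.2)^-1%g i))%R], (a.2)^-1%g).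

Lemma GmulA : associative (@Gmul m n : G -> G -> G).
Proof.
move=> a b c; rewrite /Gmul /=; congr pair; last by rewrite mulgA.
by apply/ffunP=> i; rewrite !ffunE /= permM addrA.
Qed.

Lemma Gmul1g : left_id (Gone m n : G) (@Gmul m n).
Proof.
case=> k s; rewrite /Gmul /=; congr pair; last by rewrite mul1g.
by apply/ffunP=> i; rewrite !ffunE /= perm1 add0r.
Qed.

Lemma GmulVg : left_inverse (Gone m n : G) Ginv (@Gmul m n).
Proof.
case=> k s; rewrite /Gmul /Gone /=; congr pair; last by rewrite mulVg.
by apply/ffunP=> i; rewrite !ffunE /= addNr.
Qed.

End GroupLaw.

HB.instance Definition _ m n :=
  Finite_isGroup.Build (gsym m n) (@GmulA m n) (@Gmul1g m n) (@GmulVg m n).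

Section MonomialAction.
Variables m n : nat.
Local Notation G := (gsym m n).
Local Notation Z := 'I_m.-1.+1.
Local Notation gen i x k := (Defs.gen i x k : G).
Local Open Scope group_scope.

(* Viewing [g = (k, s)] as the monomial matrix with entry [xi^(k i)] at
   [(i, s i)], column [j] holds [xi^z] in row [i] exactly when
   [monact g (j, 0) = (i, z)]: [monact] is the action of G_{m,n} on
   [[n] x Z_m] by matrix multiplication. *)
Definition monact (g : G) (p : 'I_n * Z) : 'I_n * Z :=
  ((g.2)^-1%g p.1, (g.1 ((g.2)^-1%g p.1) + p.2)%R).

Lemma monact1 p : monact 1 p = p.
Proof. by case: p => i z; rewrite /monact /= invg1 perm1 ffunE add0r. Qed.

Lemma monactM (u v : G) p : monact (u * v) p = monact u (monact v p).
Proof. by case: p => i z; rewrite /monact /= ffunE invMg permM permKV addrA. Qed.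

Lemma monactK (g : G) : cancel (monact g) (monact g^-1).
Proof. by move=> p; rewrite -monactM mulVg monact1. Qed.

Lemma monact_inj (g : G) : injective (monact g).
Proof. exact: can_inj (monactK g). Qed.

(* H_a, the copy of G_{m,a}: positions [a <= s] are fixed with exponent 0. *)
Definition Gsub (a : nat) : {set G} :=
  [set g | [forall s : 'I_n, (a <= s)%N ==> (monact g (s, 0%R) == (s, 0%R))]].

Lemma Gsub_group_set a : group_set (Gsub a).
Proof.
apply/group_setP; split=> [|u v]; rewrite !inE.
  by apply/forallP=> s; rewrite monact1 eqxx implybT.
move=> /forallP Hu /forallP Hv; apply/forallP=> s; apply/implyP=> les.
by rewrite monactM (eqP (implyP (Hv s) les)) (implyP (Hu s) les).
Qed.

Canonical Gsub_group a := Group (Gsub_group_set a).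

Lemma mem_Gsub a g :
  reflect (forall s : 'I_n, (a <= s)%N -> monact g (s, 0%R) = (s, 0%R)) (g \in Gsub a).
Proof.
rewrite inE; apply: (iffP forallP) => [H s les|H s]; first exact/eqP/(implyP (H s)).
by apply/implyP=> /H ->.
Qed.

Lemma Gsub_fix a g (s : 'I_n) : g \in Gsub a -> (a <= s)%N -> g.2 s = s /\ g.1 s = 0%R.
Proof.
move=> /mem_Gsub H /H e; have e1 : (g.2)^-1%g s = s := congr1 fst e.
have := congr1 snd e; rewrite /monact; cbn [fst snd]; rewrite e1 addr0.
by split=> //; rewrite -{1}e1 permKV.
Qed.

Lemma monact_Gsub a g (s : 'I_n) z :
  g \in Gsub a -> (a <= s)%N -> monact g (s, z) = (s, z).
Proof.
move=> Hg /(Gsub_fix Hg) [e1 e2]; have e1' : (g.2)^-1%g s = s by rewrite -{1}e1 permK.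
by rewrite /monact; cbn [fst snd]; rewrite e1' e2 add0r.
Qed.

Lemma monact_Gsub_lt a g (i : 'I_n) z :
  g \in Gsub a -> (i < a)%N -> ((monact g (i, z)).1 < a)%N.
Proof.
move=> Hg lia; rewrite ltnNge; apply/negP=> le_a.
have := monact_Gsub (monact g (i, z)).2 Hg le_a; rewrite -surjective_pairing.
by move/monact_inj/(congr1 fst) => /= ei; move: lia; rewrite -ei ltnNge le_a.
Qed.

Lemma monact_Gsub_le a g (x : 'I_n) p : g \in Gsub a -> (a <= x)%N ->
  ((monact g p).1 <= x)%N = (p.1 <= x)%N.
Proof.
move=> Hg lax; rewrite [p]surjective_pairing; have [lpa|lap] := ltnP p.1 a.
  have lga := monact_Gsub_lt p.2 Hg lpa.
  by rewrite (leq_trans (ltnW lga) lax) (leq_trans (ltnW lpa) lax).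
by rewrite (monact_Gsub _ Hg lap).
Qed.

Lemma Gsub_subset a b : (a <= b)%N -> Gsub a \subset Gsub b.
Proof.
move=> lab; apply/fintype.subsetP=> g /mem_Gsub Hg; apply/mem_Gsub=> s lbs.
exact/Hg/(leq_trans lab).
Qed.

Lemma Gsub0 : Gsub 0 = 1.
Proof.
apply/eqP; rewrite finset.eqEsubset sub1G andbT; apply/fintype.subsetP=> g Hg.
rewrite inE; apply/eqP; case: g Hg => k s /Gsub_fix Hg; congr pair.
  by apply/ffunP=> i; rewrite ffunE; case: (Hg i).
by apply/permP=> i; rewrite perm1; case: (Hg i).
Qed.

Lemma GsubT : Gsub n = [set: G].
Proof.
by apply/setP=> g; rewrite finset.in_setT; apply/mem_Gsub=> s; rewrite leqNgt ltn_ord.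
Qed.

Lemma mem_Gsub_coset a (u v : G) :
  reflect (forall s : 'I_n, (a <= s)%N -> monact u (s, 0%R) = monact v (s, 0%R))
          (u^-1 * v \in Gsub a).
Proof.
apply: (iffP (mem_Gsub _ _)) => H s /H; rewrite monactM.
  by move/(congr1 (monact u)); rewrite -monactM mulgV monact1.
by move=> <-; rewrite -monactM mulVg monact1.
Qed.

Lemma monact_gen (i x s : 'I_n) (k z : Z) :
  monact (gen i x k) (s, z) =
  (tperm i x s, ((if (s == i) || (s == x) then k else 0) + z)%R).
Proof.
rewrite /monact /= tpermV ffunE; congr (pair _ (_ + _)%R).
by case: tpermP => [->|->|/eqP/negPf-> /eqP/negPf->]; rewrite ?eqxx ?orbT.
Qed.

Lemma gen_Gsub (i x : 'I_n) k : (i <= x)%N -> gen i x k \in Gsub x.+1.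
Proof.
move=> lix; apply/mem_Gsub=> s lxs; rewrite monact_gen addr0.
have /negPf nsi : s != i by rewrite neq_ltn (leq_ltn_trans lix lxs) orbT.
have /negPf nsx : s != x by rewrite neq_ltn lxs orbT.
by rewrite tpermD ?nsi ?nsx // eq_sym ?nsi ?nsx.
Qed.

Lemma invg_gen (i x : 'I_n) k : (gen i x k)^-1 = gen i x (- k)%R.
Proof.
apply/eqP; rewrite eq_invg_mul; apply/eqP.
change (Gmul (gen i x k) (gen i x (- k)%R) = Gone m n).
rewrite /Gmul /Gone /= tperm2; congr pair; apply/ffunP=> s.
rewrite !ffunE; case: tpermP => [->|->|/eqP/negPf-> /eqP/negPf->];
  by rewrite ?eqxx ?orbT ?subrr ?addr0.
Qed.

(* Moving [b] in H_a past a step at a position [x >= a] relabels the step: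
   [b * g_{i,x,k}] lies in [g_{i',x,k'} * H_a] for [(i', k') = monact b (i, k)]. *)
Lemma gen_monact_coset a (b : G) (x : 'I_n) (p : 'I_n * Z) :
  b \in Gsub a -> (a <= x)%N ->
  (gen (monact b p).1 x (monact b p).2)^-1 * (b * gen p.1 x p.2) \in Gsub a.
Proof.
move=> Hb lax; apply/mem_Gsub_coset => s las; rewrite monactM !monact_gen !addr0.
case: p => i k; cbn [fst snd].
have [->|nsx] := eqVneq s x.
  by rewrite !tpermR !orbT; apply: esym (surjective_pairing _).
have [esi|nsi] := eqVneq s i.
  have -> : monact b (i, k) = (i, k) by apply: (monact_Gsub _ Hb); rewrite -esi.
  by rewrite esi tpermL eqxx (monact_Gsub _ Hb lax).
have nsq : s != (monact b (i, k)).1.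
  have [b2s _] := Gsub_fix Hb las.
  by rewrite /= -(inj_eq (@perm_inj _ b.2)) permKV b2s.
by rewrite (negPf nsq) !tpermD 1?eq_sym // (monact_Gsub _ Hb las).
Qed.

Lemma gen_cosetE (x : 'I_n) (g : G) (p : 'I_n * Z) :
  (p.1 <= x)%N && ((gen p.1 x p.2)^-1 * g \in Gsub x) =
  (g \in Gsub x.+1) && (p == monact g (x, 0%R)).
Proof.
have gen_fix (q : 'I_n * Z) (s : 'I_n) :
    (q.1 <= x)%N -> (x < s)%N -> monact (gen q.1 x q.2) (s, 0%R) = (s, 0%R).
  by move=> lqx; apply: monact_Gsub; apply: gen_Gsub.
have gen_x (q : 'I_n * Z) : monact (gen q.1 x q.2) (x, 0%R) = q.
  by rewrite monact_gen tpermR eqxx orbT addr0 -surjective_pairing.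
apply/idP/idP.
  case/andP=> lpx /mem_Gsub_coset H; rewrite -(H x (leqnn x)) gen_x eqxx andbT.
  by apply/mem_Gsub=> s lxs; rewrite -(H s (ltnW lxs)) gen_fix.
case/andP=> Hg /eqP ->; have lqx := monact_Gsub_lt 0%R Hg (ltnSn x).
rewrite -ltnS lqx; apply/mem_Gsub_coset => s.
rewrite leq_eqVlt => /orP[/eqP/val_inj<-|lxs]; first by rewrite gen_x.
by rewrite gen_fix // (monact_Gsub _ Hg lxs).
Qed.

End MonomialAction.

Arguments Gsub {m n} a.
Arguments Gsub_group {m n} a.
Arguments Gsub_subset {m n a b}.
Arguments Gsub0 {m n}.
Arguments GsubT {m n}.
Arguments monact_inj {m n} g.

Section Walk.
Variables (R : realType) (m n : nat).
Local Notation G := (gsym m n).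
Local Notation Z := 'I_m.-1.+1.
Local Notation gen i x k := (Defs.gen i x k : G).
Local Notation U a := (@unif R G (Gsub_group a)).

Lemma convE (P Q : G -> R) : Defs.conv P Q = convg P Q.
Proof.
apply: funext => g.
change (\sum_(a : G) \sum_(b : G) (if (a * b)%g == g then P a * Q b else 0)
  = \sum_(a : G) P a * Q (a^-1 * g)%g).
apply: eq_bigr => a _.
rewrite (bigD1 (a^-1 * g)%g) //= mulKVg eqxx big1 ?addr0 // => b nb.
by case: eqP => // e; case/negP: nb; rewrite -e mulKg.
Qed.

Lemma delta1E : @delta1 R m n = @unif R G 1%G.
Proof. by apply: funext => g; rewrite /delta1 /unif inE cards1 invr1; case: eqP. Qed.

Lemma UnifE : @Unif R m n = @unif R G [set: G]%G.
Proof. by apply: funext => g; rewrite /Unif /unif inE cardsT. Qed.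

(* The law of OST_{m,n} conditioned on [j = x]. *)
Definition step (x : 'I_n) (g : G) : R :=
  \sum_(p : 'I_n * Z | (p.1 <= x)%N)
     (if gen p.1 x p.2 == g then ((x.+1)%:R * m%:R)^-1 else 0).

Lemma sum_stepM x (F : G -> R) : \sum_g step x g * F g =
  ((x.+1)%:R * m%:R)^-1 * \sum_(p : 'I_n * Z | (p.1 <= x)%N) F (gen p.1 x p.2).
Proof.
under eq_bigr do rewrite mulr_suml; rewrite exchange_big mulr_sumr /=.
apply: eq_bigr => p _; rewrite (bigD1 (gen p.1 x p.2)) //= eqxx big1 ?addr0 // => g.
by rewrite eq_sym => /negPf ->; rewrite mul0r.
Qed.

Lemma convg_stepl x (F : G -> R) g : convg (step x) F g =
  ((x.+1)%:R * m%:R)^-1 *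
  \sum_(p : 'I_n * Z | (p.1 <= x)%N) F ((gen p.1 x p.2)^-1 * g)%g.
Proof. exact: sum_stepM. Qed.

Lemma step_ge0 x g : 0 <= step x g.
Proof. by apply: sumr_ge0 => p _; case: ifP; rewrite ?invr_ge0 ?mulr_ge0 ?ler0n. Qed.

Lemma sum_step x : (0 < m)%N -> \sum_g step x g = 1.
Proof.
move=> m_gt0; rewrite -(eq_bigr _ (fun g _ => mulr1 (step x g))) sum_stepM.
have -> : \sum_(p : 'I_n * Z | (p.1 <= x)%N) (1 : R) =
          \sum_(i : 'I_n | (i <= x)%N) \sum_(k : Z) 1.
  by rewrite pair_big_dep; apply: eq_bigl => p; rewrite andbT.
rewrite (eq_bigr (fun=> m%:R)) => [|i _]; last by rewrite sumr_const card_ord prednK.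
rewrite (eq_bigl (fun i : 'I_n => (i < x.+1)%N)) //.
rewrite (big_ord_narrow (ltn_ord x)) sumr_const card_ord -[m%:R *+ _]mulr_natl.
by rewrite mulVf // mulf_neq0 // pnatr_eq0 // -lt0n.
Qed.

Lemma finvg_step x : finvg (step x) = step x.
Proof.
have negK : involutive (fun p : 'I_n * Z => (p.1, - p.2)) by case=> i k; rewrite /= opprK.
apply: funext => g; rewrite /finvg /step (reindex_inj (inv_inj negK)) /=.
by apply: eq_bigr => p _; rewrite -invg_gen (inj_eq invg_inj).
Qed.

Lemma OSTE : @OST R m n = fun g => \sum_(j <- index_enum 'I_n) n%:R^-1 * step j g.
Proof.
apply: funext => g; apply: eq_bigr => j _; rewrite pair_big_dep mulr_sumr.
apply: eq_big => [p|p _]; first by rewrite andbT.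
by case: ifP; rewrite ?mulr0 // -mulrA invfM.
Qed.

Lemma left_inv_convg_step a x F :
  left_inv (Gsub a) F -> left_inv (Gsub a) (convg (step x) F).
Proof.
move=> HF b g Hb; rewrite !convg_stepl; congr (_ * _).
have [lxa|lax] := ltnP x a.
  apply: eq_bigr => p lpx; set y := gen p.1 x p.2.
  have Hy : y \in Gsub a := fintype.subsetP (Gsub_subset lxa) _ (gen_Gsub _ lpx).
  have -> : (y^-1 * (b * g) = b ^ y * (y^-1 * g))%g by rewrite conjgE -!mulgA mulKVg.
  by rewrite HF // groupJ.
have Hb' : b^-1%g \in Gsub a by rewrite groupV.
rewrite [RHS](reindex_inj (monact_inj b^-1%g)) /=.
apply: eq_big => [p|p lpx]; first by rewrite (monact_Gsub_le _ Hb' lax).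
set q := monact b^-1%g p; set h := ((gen q.1 x q.2)^-1 * (b^-1 * gen p.1 x p.2))%g.
have Hh : h \in Gsub a by apply: gen_monact_coset.
have -> : ((gen p.1 x p.2)^-1 * (b * g) = h^-1 * ((gen q.1 x q.2)^-1 * g))%g.
  by rewrite /h !invMg !invgK !mulgA mulgK.
by rewrite HF // groupV.
Qed.

Lemma step_unif_comm a x : convg (step x) (U a) = convg (U a) (step x).
Proof.
apply: convg_unif_comm; first by apply: left_inv_convg_step; apply: unif_left_inv.
apply: left_inv_finvg; rewrite finvg_convg finvg_step finvg_unif.
by apply: left_inv_convg_step; apply: unif_left_inv.
Qed.

Lemma step_unif (x : 'I_n) : (0 < m)%N -> convg (step x) (U x) = U x.+1.
Proof.
move=> m_gt0; apply: (@eq_unif _ _ _ _ (((x.+1)%:R * m%:R)^-1 * #|Gsub x|%:R^-1)).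
  move=> g; rewrite convg_stepl /unif -big_mkcondr /=.
  rewrite (eq_bigl _ _ (gen_cosetE x g)); case: ifP => Hg.
    by rewrite (big_pred1 (monact g (x, 0%R))) // => p; rewrite Hg.
  by rewrite big_pred0 ?mulr0 // => p; rewrite Hg.
by rewrite sum_convg sum_step // sum_unif mulr1.
Qed.

Definition walk (w : seq 'I_n) : G -> R :=
  foldr (fun x F => convg (step x) F) (unif 1%G) w.

Lemma walk_cat y z : walk (y ++ z) = convg (walk y) (walk z).
Proof. by elim: y => [|x y IH] /=; rewrite ?convg_unif1l // IH convgA. Qed.

Lemma walk_rcons z x : walk (rcons z x) = convg (walk z) (step x).
Proof. by rewrite -cats1 walk_cat /= convg_unif1r. Qed.

Lemma walk_ge0 w g : 0 <= walk w g.
Proof.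
elim: w g => [|x w IH] g /=; first exact: unif_ge0.
by apply: convg_ge0 => // a; apply: step_ge0.
Qed.

Lemma sum_walk w : (0 < m)%N -> \sum_g walk w g = 1.
Proof.
move=> m_gt0; elim: w => [|x w IH] /=; first exact: sum_unif.
by rewrite sum_convg IH sum_step // mulr1.
Qed.

Lemma walk_unif_comm a w : convg (walk w) (U a) = convg (U a) (walk w).
Proof.
elim: w => [|x w IH] /=; first by rewrite convg_unif1l convg_unif1r.
by rewrite convgA IH -convgA step_unif_comm convgA.
Qed.

Lemma walk_cover_unif w a : (0 < m)%N -> (a <= n)%N ->
  (forall s : 'I_n, (a <= s)%N -> s \in w) -> convg (walk w) (U a) = U n.
Proof.
move=> m_gt0; move Hd: (n - a)%N => d; elim: d a w Hd => [|d IH] a w Hd lan Hw.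
  have -> : a = n by apply/eqP; rewrite eqn_leq lan -subn_eq0 Hd.
  rewrite (_ : Gsub_group n = [set: G]%G) ?convg_unifT ?sum_walk //.
  exact/val_inj/GsubT.
have lt_an : (a < n)%N by rewrite -subn_gt0 Hd.
pose s := Ordinal lt_an; have /splitPr Hs := Hw s (leqnn a).
move: Hw; case: Hs => y z Hw.
rewrite walk_cat /= !convgA walk_unif_comm -(convgA (step s)) step_unif //.
rewrite -walk_unif_comm -convgA -walk_cat; apply: IH => [||t lat]; rewrite ?subnS ?Hd //.
have := Hw t (ltnW lat); rewrite !mem_cat in_cons => /or3P[->|/eqP ets|->]; rewrite ?orbT //.
by move: lat; rewrite ets ltnn.
Qed.

Lemma walk_cover w : (0 < m)%N -> (forall s : 'I_n, s \in w) -> walk w = @Unif R m n.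
Proof.
move=> m_gt0 Hw; rewrite -[walk w]convg_unif1r UnifE.
have -> : 1%G = Gsub_group 0 :> {group G} by apply/val_inj; rewrite /= Gsub0.
have -> : [set: G]%G = Gsub_group n by apply/val_inj; rewrite /= GsubT.
exact: walk_cover_unif.
Qed.

End Walk.

Section Words.
Variables (R : numDomainType) (I : finType).

Fixpoint words t : seq (seq I) :=
  if t is t'.+1 then [seq rcons w j | w <- words t', j <- index_enum I] else [:: [::]].

Lemma big_words_S t (F : seq I -> R) :
  \sum_(w <- words t.+1) F w = \sum_(w <- words t) \sum_(j <- index_enum I) F (rcons w j).
Proof. exact: big_allpairs_dep. Qed.

Lemma sum_words t : \sum_(w <- words t) 1 = #|I|%:R ^+ t :> R.
Proof.
elim: t => [|t IH]; first by rewrite big_seq1 expr0.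
rewrite big_words_S exprS -IH mulr_sumr.
by apply: eq_bigr => w _; rewrite sumr_const mulr1.
Qed.

Lemma sum_words_avoid t (s : I) :
  \sum_(w <- words t) (s \notin w)%:R = (#|I|%:R - 1) ^+ t :> R.
Proof.
elim: t => [|t IH]; first by rewrite big_seq1 expr0.
rewrite big_words_S exprS -IH mulr_sumr; apply: eq_bigr => w _.
rewrite (eq_bigr (fun j => (s \notin w)%:R * (1 - (j == s)%:R))) => [|j _]; last first.
  rewrite mem_rcons in_cons eq_sym.
  by case: (j == s); case: (s \in w); rewrite /= ?subrr ?subr0 ?mulr0 ?mulr1.
rewrite -mulr_sumr sumrB sumr_const (bigD1 s) //= eqxx big1 ?addr0 => [|j /negPf -> //].
by rewrite mulrC.
Qed.

Lemma covers_union_bound (w : seq I) :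
  1 - \sum_(s : I) (s \notin w)%:R <= [forall s, s \in w]%:R :> R.
Proof.
case: forallP => [Hw|/forallP/forallPn[s ws]].
  by rewrite big1 ?subr0 // => s _; rewrite Hw.
by rewrite subr_le0 (bigD1 s) //= ws lerDl sumr_ge0.
Qed.

Lemma sum_words_covers t :
  #|I|%:R ^+ t - #|I|%:R * (#|I|%:R - 1) ^+ t <=
  \sum_(w <- words t) [forall s, s \in w]%:R :> R.
Proof.
rewrite -sum_words mulr_natl -sumr_const.
under [X in _ - X]eq_bigr => s _ do rewrite -(sum_words_avoid t s).
by rewrite exchange_big -sumrB; apply: ler_sum => w _; apply: covers_union_bound.
Qed.

End Words.

Section Separation.
Variables (R : realType) (m n : nat).
Hypotheses (m_gt0 : (0 < m)%N) (n_gt0 : (0 < n)%N).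
Local Notation walk := (@walk R m n).

Lemma convpow_OST t :
  convpow (@OST R m n) t = fun g => \sum_(w <- words 'I_n t) n%:R^-1 ^+ t * walk w g.
Proof.
elim: t => [|t IH]; first by apply: funext => g; rewrite /= big_seq1 expr0 mul1r delta1E.
rewrite /convpow iterS -/(convpow _ t) IH convE OSTE convg_suml; apply: funext => g.
rewrite big_words_S; apply: eq_bigr => w _.
rewrite convg_sumr mulr_sumr; apply: eq_bigr => j _.
by rewrite walk_rcons exprS mulrA [_ * n%:R^-1]mulrC.
Qed.

Lemma convpow_OST_ge t g :
  1 - n%:R * (1 - n%:R^-1) ^+ t <= convpow (@OST R m n) t g / @Unif R m n g.
Proof.
have n0 : n%:R != 0 :> R by rewrite pnatr_eq0 -lt0n.
have Upos : 0 < @Unif R m n g by rewrite invr_gt0 ltr0n; apply/card_gt0P; exists g.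
have -> : 1 - n%:R * (1 - n%:R^-1) ^+ t =
          n%:R^-1 ^+ t * (n%:R ^+ t - n%:R * (n%:R - 1) ^+ t) :> R.
  by rewrite mulrBr -exprMn mulVf // expr1n mulrCA -exprMn mulrBr mulr1 mulVf.
rewrite ler_pdivlMr // convpow_OST.
apply: (@le_trans _ _ (\sum_(w <- words 'I_n t)
          n%:R^-1 ^+ t * [forall s, s \in w]%:R * @Unif R m n g)).
  rewrite -mulr_suml -mulr_sumr ler_pM2r // ler_pM2l ?exprn_gt0 ?invr_gt0 ?ltr0n //.
  by have := sum_words_covers R 'I_n t; rewrite card_ord.
apply: ler_sum => w _; rewrite -mulrA ler_pM2l ?exprn_gt0 ?invr_gt0 ?ltr0n //.
case: forallP => [/(walk_cover R m_gt0) -> |_]; first by rewrite mul1r.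
by rewrite mul0r walk_ge0.
Qed.

Lemma sep_convpow_OST_le t :
  sep (convpow (@OST R m n) t) <= n%:R * (1 - n%:R^-1) ^+ t.
Proof.
rewrite /sep lerBlDr -lerBlDl; apply: le_bigmin => [|g _]; exact: convpow_OST_ge.
Qed.

End Separation.

Section Asymptotics.
Variable R : realType.
Local Open Scope classical_set_scope.

Lemma cutoff_geometric_le (c : R) (k : nat) : (2 <= k)%N ->
  k%:R * (1 - k%:R^-1) ^+ Num.truncn (k%:R * ln (k%:R : R) + c * k%:R)
    <= expR (- c) / (1 - k%:R^-1).
Proof.
move=> k2; set X := k%:R * _ + _; set t := Num.truncn X; set q := 1 - (k%:R : R)^-1.
have k_gt0 : (0 : R) < k%:R by rewrite ltr0n (leq_trans _ k2).
have q_gt0 : 0 < q by rewrite subr_gt0 invf_lt1 // ltr1n.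
rewrite ler_pdivlMr // -mulrA -exprSr.
have q_le : q <= expR (- k%:R^-1) by apply: expR_ge1Dx.
have qt_le : q ^+ t.+1 <= expR ((t.+1)%:R * - k%:R^-1).
  by rewrite expRM_natl lerXn2r // nnegrE ?expR_ge0 ?ltW.
rewrite mulrC -ler_pdivlMr //; apply: le_trans qt_le _.
have -> : expR (- c) / k%:R = expR (- c - ln k%:R).
  by rewrite expRD [expR (- ln _)]expRN lnK // posrE.
rewrite ler_expR mulrN -opprD lerN2.
have : X / k%:R < (t.+1)%:R / k%:R by rewrite ltr_pM2r ?invr_gt0 // truncnS_gt.
rewrite /X mulrDl mulrAC mulfV ?gt_eqF // mul1r mulfK ?gt_eqF // addrC.
exact: ltW.
Qed.

Lemma div_subr_inv_near (E e : R) : 0 <= E -> 0 < e ->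
  \forall k \near \oo, E / (1 - k%:R^-1) <= E + e.
Proof.
move=> E0 e0; exists (Num.truncn (E / e)).+2 => // k /= Nk.
have Ek : E / e + 1 < k%:R.
  apply: (lt_le_trans (y := (Num.truncn (E / e)).+2%:R)); last by rewrite ler_nat.
  by rewrite -natr1 ltrD2r truncnS_gt.
have k_gt1 : 1 < k%:R :> R by apply: le_lt_trans Ek; rewrite lerDr divr_ge0 // ltW.
have k_gt0 : (0 : R) < k%:R by apply: lt_trans k_gt1.
have Eek : (E + e) / k%:R < e.
  have : (E + e) / e < k%:R by rewrite mulrDl divff ?gt_eqF.
  by rewrite !ltr_pdivrMr // mulrC.
rewrite ler_pdivrMr ?subr_gt0 ?invf_lt1 //; lra.
Qed.

Lemma limn_esup_le_near (u : nat -> R) (l : R) :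
  (forall e : R, 0 < e -> \forall k \near \oo, u k <= l + e) ->
  (limn_esup (fun k => (u k)%:E) <= l%:E)%E.
Proof.
move=> Hu; apply/lee_addgt0Pr => e e0; rewrite limn_esup_lim.
apply: lime_le; first exact: is_cvg_esups.
have [N _ HN] := Hu e e0; exists N => // k /= Nk.
apply: ge_ereal_sup => _ [j /= kj <-]; rewrite -EFinD lee_fin.
exact/HN/(leq_trans Nk kj).
Qed.

End Asymptotics.

Theorem proposition4p8 (R : realType) (m : nat) (hm : (1 <= m)%N)
  (c : R) (hc : 0 < c) :
  (limn_esup (fun n : nat =>
     (sep (convpow (@OST R m n)
        (Num.truncn (n%:R * ln (n%:R : R) + c * n%:R))))%:E)
   <= (expR (- c))%:E)%E.
Proof.
apply: limn_esup_le_near => e e0.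
have n2 : \forall n \near \oo%classic, (2 <= n)%N by exists 2.
apply: filterS2 n2 (div_subr_inv_near (expR_ge0 (- c)) e0) => n n2 He.
apply: le_trans _ (le_trans (cutoff_geometric_le c n2) He).
by apply: sep_convpow_OST_le => //; apply: ltnW.
Qed.
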